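(* Let $X$ be a topological space in which every open set is a union of countably many clopen sets. Then $X$ is hereditarily Hurewicz (i.e., every subspace of $X$ satisfies $\mathsf{U}_{fin}(\mathrm{O},\Gamma)$) if, and only if, for every continuous map $\Psi:X\to\mathrm{EF}$, the image $\Psi[X]$ is bounded.
   Context: A cover $\mathcal{U}$ of a space $Y$ is point-cofinite if it is infinite and each point of $Y$ belongs to all but finitely many members of $\mathcal{U}$. A space $Y$ satisfies $\mathsf{U}_{fin}(\mathrm{O},\Gamma)$ (the Hurewicz property) if whenever $\mathcal{U}_1,\mathcal{U}_2,\dots$ are countable open covers of $Y$ none of which contains a finite subcover, there are finite sets $\mathcal{F}_n\subseteq\mathcal{U}_n$ such that $\{\bigcup\mathcal{F}_n:n\in\mathbb{N}\}$ is a point-cofinite cover of $Y$. Let $\overline{\mathbb{N}}=\mathbb{N}\cup\{\infty\}$ be the one-point compactification of $\mathbb{N}$, and give $\overline{\mathbb{N}}^{\mathbb{N}}$ the product topology. $\mathrm{EF}$ is the subspace of $\overline{\mathbb{N}}^{\mathbb{N}}$ of eventually finite elements, i.e., those $f$ for which there is $m$ with $f(n)<\infty$ for all $n\ge m$. For $f\in\mathrm{EF}$ and $g\in\mathbb{N}^{\mathbb{N}}$, $f\le^* g$ means $f(n)\le g(n)$ for all but finitely many $n$. A set $Y\subseteq\mathrm{EF}$ is bounded if there is $g\in\mathbb{N}^{\mathbb{N}}$ with $f\le^*g$ for all $f\in Y$. *)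

From Stdlib Require Import List Arith.
Import ListNotations.

Definition is_topology {T : Type} (op : (T -> Prop) -> Prop) : Prop :=
  op (fun _ => True) /\
  (forall F : (T -> Prop) -> Prop, (forall U, F U -> op U) ->
     op (fun x => exists U, F U /\ U x)) /\
  (forall U V, op U -> op V -> op (fun x => U x /\ V x)).

Definition subspace_open {T : Type} (op : (T -> Prop) -> Prop) (Y : T -> Prop)
  : ({x : T | Y x} -> Prop) -> Prop :=
  fun W => exists U, op U /\ forall y : {x : T | Y x}, W y <-> U (proj1_sig y).

Definition continuous {A B : Type} (opA : (A -> Prop) -> Prop)
  (opB : (B -> Prop) -> Prop) (f : A -> B) : Prop :=
  forall V, opB V -> opA (fun x => V (f x)).

Definition clopen {T : Type} (op : (T -> Prop) -> Prop) (C : T -> Prop) : Prop :=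
  op C /\ op (fun x => ~ C x).

Definition open_countable_union_clopen {T : Type} (op : (T -> Prop) -> Prop) : Prop :=
  forall U, op U -> exists C : nat -> (T -> Prop),
    (forall n, clopen op (C n)) /\ (forall x, U x <-> exists n, C n x).

Definition finite_family {T : Type} (S : (T -> Prop) -> Prop) : Prop :=
  exists l : list (T -> Prop), forall W, S W -> In W l.

Definition point_cofinite_cover {T : Type} (S : (T -> Prop) -> Prop) : Prop :=
  (forall y : T, exists W, S W /\ W y) /\
  ~ finite_family S /\
  (forall y : T, finite_family (fun W => S W /\ ~ W y)).

Definition open_cover_seq {T : Type} (op : (T -> Prop) -> Prop) (u : nat -> (T -> Prop)) : Prop :=
  (forall n, op (u n)) /\ (forall y, exists n, u n y).

Definition in_range {T : Type} (u : nat -> (T -> Prop)) (W : T -> Prop) : Prop :=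
  exists n, u n = W.

Definition no_finite_subcover {T : Type} (u : nat -> (T -> Prop)) : Prop :=
  forall l : list (T -> Prop), (forall W, In W l -> in_range u W) ->
    exists y, forall W, In W l -> ~ W y.

Definition union_list {T : Type} (l : list (T -> Prop)) : T -> Prop :=
  fun y => exists W, In W l /\ W y.

Definition Hurewicz {T : Type} (op : (T -> Prop) -> Prop) : Prop :=
  forall u : nat -> nat -> (T -> Prop),
    (forall k, open_cover_seq op (u k) /\ no_finite_subcover (u k)) ->
    exists F : nat -> list (T -> Prop),
      (forall k W, In W (F k) -> in_range (u k) W) /\
      point_cofinite_cover (fun W => exists k, W = union_list (F k)).

Definition hereditarily_Hurewicz {T : Type} (op : (T -> Prop) -> Prop) : Prop :=
  forall Y : T -> Prop, Hurewicz (subspace_open op Y).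

(** Nbar = N ∪ {∞}, with None = ∞; one-point compactification of discrete N. *)
Definition Nbar := option nat.

Definition Nbar_open (U : Nbar -> Prop) : Prop :=
  U None -> exists m, forall n, m <= n -> U (Some n).

(** Product topology on Nbar^N: U is open iff each point of U has a basic
    neighbourhood (finite intersection of open cylinders) inside U. *)
Definition prod_open (U : (nat -> Nbar) -> Prop) : Prop :=
  forall f, U f -> exists l : list (nat * (Nbar -> Prop)),
    (forall p, In p l -> Nbar_open (snd p) /\ snd p (f (fst p))) /\
    (forall g, (forall p, In p l -> snd p (g (fst p))) -> U g).

Definition eventually_finite (f : nat -> Nbar) : Prop :=
  exists m, forall n, m <= n -> f n <> None.

Definition EF := {f : nat -> Nbar | eventually_finite f}.

Definition EF_open : (EF -> Prop) -> Prop := subspace_open prod_open eventually_finite.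

Definition Nbar_le (a : Nbar) (b : nat) : Prop :=
  match a with Some k => k <= b | None => False end.

Definition le_star (f : nat -> Nbar) (g : nat -> nat) : Prop :=
  exists m, forall n, m <= n -> Nbar_le (f n) (g n).

Definition bounded (Y : EF -> Prop) : Prop :=
  exists g : nat -> nat, forall f, Y f -> le_star (proj1_sig f) g.

From Stdlib Require Import List Arith Lia Classical ClassicalEpsilon
  FunctionalExtensionality PropExtensionality Cantor Wf_nat.
Import ListNotations.

(* A continuous Psi : X -> EF maps the subspace where Psi x is finite from m on into
   N^N, and the sets {y | Psi y (m + i) <= j for all i <= k} form, for each k, an open
   cover increasing in j; the Hurewicz property of that subspace chooses j = h k so that
   every point is eventually covered, which bounds Psi there, and a diagonal maximum
   over m bounds the whole image.
   Conversely, given covers u k of Y, write each member as a union of clopen subsets of X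
   and let index_of k x be the position of the first clopen piece of the k-th cover
   containing x. These maps into Nbar are continuous and finite on Y, and a re-indexing
   packs them into one continuous map into EF. A bound on its image yields G with
   index_of k x <= G k for almost all k, so finitely many members of each u k,
   determined by G k, do the job. *)

Lemma pred_ext {T : Type} (A B : T -> Prop) : (forall x, A x <-> B x) -> A = B.
Proof.
  intro H; apply functional_extensionality; intro x; apply propositional_extensionality; auto.
Qed.

Section OpenSets.
Context {T : Type} (op : (T -> Prop) -> Prop).

Lemma open_ext (A B : T -> Prop) : (forall x, A x <-> B x) -> op A -> op B.
Proof. intro H; rewrite (pred_ext A B H); auto. Qed.

Lemma clopen_ext (A B : T -> Prop) : (forall x, A x <-> B x) -> clopen op A -> clopen op B.
Proof.
  intros H [HA HnA]; split.
  - apply (open_ext A); auto.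
  - apply (open_ext (fun x => ~ A x)); auto. intro x; specialize (H x); tauto.
Qed.

Lemma clopen_not (A : T -> Prop) : clopen op A -> clopen op (fun x => ~ A x).
Proof.
  intros [HA HnA]; split; auto. apply (open_ext A); auto. intro x; split; [tauto | apply NNPP].
Qed.

Hypothesis Htop : is_topology op.

Lemma open_of_locally_open (A : T -> Prop) :
  (forall x, A x -> exists N, op N /\ N x /\ forall z, N z -> A z) -> op A.
Proof.
  intro H. destruct Htop as [_ [Hunion _]].
  apply (open_ext (fun x => exists N, (op N /\ forall z, N z -> A z) /\ N x)).
  - intro x; split.
    + intros [N [[_ HN] Nx]]; auto.
    + intro Ax. destruct (H x Ax) as [N [? [? ?]]]. exists N; auto.
  - apply Hunion. intros N [? _]; auto.
Qed.

Lemma open_and (A B : T -> Prop) : op A -> op B -> op (fun x => A x /\ B x).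
Proof. apply Htop. Qed.

Lemma open_or (A B : T -> Prop) : op A -> op B -> op (fun x => A x \/ B x).
Proof.
  intros HA HB. apply open_of_locally_open. intros x [Ax|Bx]; [exists A | exists B]; auto.
Qed.

Lemma open_const (P : Prop) : op (fun _ => P).
Proof.
  destruct (classic P) as [HP|HP].
  - apply (open_ext (fun _ => True)); [tauto | apply Htop].
  - apply open_of_locally_open. intros x Hx; contradiction.
Qed.

Lemma open_forall_in {B : Type} (l : list B) (A : B -> T -> Prop) :
  (forall b, In b l -> op (A b)) -> op (fun x => forall b, In b l -> A b x).
Proof.
  induction l as [|b l IH]; intro Hl.
  - apply (open_ext (fun _ => True)); [intros x; split; [intros _ _ []|auto] | apply Htop].
  - apply (open_ext (fun x => A b x /\ forall b', In b' l -> A b' x)).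
    + intro x; split.
      * intros [Hb Hl'] b' [<-|Hb']; auto.
      * intro H; split; [apply H; left | intros b' Hb'; apply H; right]; auto.
    + apply open_and; [apply Hl; left | apply IH; intros; apply Hl; right]; auto.
Qed.

Lemma clopen_and (A B : T -> Prop) :
  clopen op A -> clopen op B -> clopen op (fun x => A x /\ B x).
Proof.
  intros [HA HnA] [HB HnB]; split.
  - apply open_and; auto.
  - apply (open_ext (fun x => ~ A x \/ ~ B x)); [intro x; tauto | apply open_or; auto].
Qed.

Lemma clopen_or (A B : T -> Prop) :
  clopen op A -> clopen op B -> clopen op (fun x => A x \/ B x).
Proof.
  intros [HA HnA] [HB HnB]; split.
  - apply open_or; auto.
  - apply (open_ext (fun x => ~ A x /\ ~ B x)); [intro x; tauto | apply open_and; auto].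
Qed.

Lemma clopen_forall_lt (P : nat -> T -> Prop) (n : nat) :
  (forall i, i < n -> clopen op (P i)) -> clopen op (fun x => forall i, i < n -> P i x).
Proof.
  induction n as [|n IH]; intro HP.
  - apply (clopen_ext (fun _ => True)); [intro x; split; [intros _ i Hi; lia | auto]|].
    split; apply open_const.
  - apply (clopen_ext (fun x => (forall i, i < n -> P i x) /\ P n x)).
    + intro x; split.
      * intros [Hlt Hn] i Hi. destruct (Nat.eq_dec i n) as [->|Hne]; auto. apply Hlt; lia.
      * intro H; split; auto.
    + apply clopen_and; auto.
Qed.

Lemma clopen_exists_le (P : nat -> T -> Prop) (n : nat) :
  (forall i, clopen op (P i)) -> clopen op (fun x => exists i, i <= n /\ P i x).
Proof.
  intro HP. apply (clopen_ext (fun x => ~ forall i, i < S n -> ~ P i x)).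
  - intro x; split.
    + intro H. apply NNPP; intro Hn. apply H; intros i Hi Pi; apply Hn; exists i; split; [lia | auto].
    + intros [i [Hi Pi]] H. apply (H i); [lia | auto].
  - apply clopen_not, clopen_forall_lt. intros; apply clopen_not; auto.
Qed.

End OpenSets.

Definition least (P : nat -> Prop) (n : nat) : Prop := P n /\ forall i, i < n -> ~ P i.

Lemma least_unique (P : nat -> Prop) (m n : nat) : least P m -> least P n -> m = n.
Proof.
  intros [Pm Hm] [Pn Hn].
  destruct (Nat.lt_trichotomy m n) as [H|[H|H]]; auto; exfalso; [apply (Hn m) | apply (Hm n)]; auto.
Qed.

Lemma least_exists (P : nat -> Prop) : (exists n, P n) -> exists n, least P n.
Proof.
  intro HP.
  destruct (dec_inh_nat_subset_has_unique_least_element P (fun n => classic (P n)) HP)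
    as [n [[Pn Hn] _]].
  exists n; split; auto. intros i Hi Pi. specialize (Hn i Pi). lia.
Qed.

Lemma clopen_least {T : Type} (op : (T -> Prop) -> Prop) (Htop : is_topology op)
  (P : nat -> T -> Prop) (n : nat) :
  (forall i, clopen op (P i)) -> clopen op (fun x => least (fun i => P i x) n).
Proof.
  intro HP. apply clopen_and; auto. apply clopen_forall_lt; auto. intros; apply clopen_not; auto.
Qed.

Lemma Nbar_le_mono (a : Nbar) (t t' : nat) : t <= t' -> Nbar_le a t -> Nbar_le a t'.
Proof. destruct a; simpl; [lia | auto]. Qed.

Lemma least_Nbar_le (a : Nbar) (n : nat) : least (Nbar_le a) n <-> a = Some n.
Proof.
  unfold least; destruct a as [m|]; simpl.
  - split.
    + intros [Hmn Hlt]. f_equal. destruct (Nat.lt_ge_cases m n) as [H|H]; [|lia].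
      exfalso; apply (Hlt m H); simpl; lia.
    + intro E; injection E as ->; split; [lia | intros i Hi; simpl; lia].
  - split; [intros [[] _] | discriminate].
Qed.

Definition first_index (P : nat -> Prop) : Nbar :=
  match excluded_middle_informative (exists n, P n) with
  | left H => Some (proj1_sig (constructive_indefinite_description _ (least_exists P H)))
  | right _ => None
  end.

Lemma first_index_Some (P : nat -> Prop) (n : nat) : first_index P = Some n <-> least P n.
Proof.
  unfold first_index. destruct excluded_middle_informative as [H|H].
  - destruct constructive_indefinite_description as [m Hm]; simpl. split.
    + intro E; injection E as <-; exact Hm.
    + intro Hn; f_equal; eapply least_unique; eauto.
  - split; [discriminate|]. intros [Pn _]; exfalso; eauto.
Qed.

Lemma first_index_None (P : nat -> Prop) : first_index P = None <-> forall n, ~ P n.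
Proof.
  unfold first_index. destruct excluded_middle_informative as [[n Pn]|H].
  - split; [discriminate|]. intro H; exfalso; eapply H; eauto.
  - split; auto. intros _ n Pn; eauto.
Qed.

Lemma first_index_le (P : nat -> Prop) (t : nat) :
  Nbar_le (first_index P) t <-> exists n, n <= t /\ P n.
Proof.
  destruct (first_index P) as [m|] eqn:E; simpl.
  - apply first_index_Some in E as [Pm Hm]. split; [eauto|].
    intros [n [Hn Pn]]. destruct (Nat.lt_ge_cases n m) as [H|H]; [exfalso; eapply Hm; eauto | lia].
  - rewrite first_index_None in E. split; [contradiction|]. intros [n [_ Pn]]; eapply E; eauto.
Qed.

Section NbarValuedMaps.
Context {T : Type} (op : (T -> Prop) -> Prop) (Htop : is_topology op).

(* Since [Nbar] is the one-point compactification of a discrete space, clopen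
   sublevel sets already make a map continuous. *)
Lemma continuous_of_clopen_sublevels (h : T -> Nbar) :
  (forall t, clopen op (fun x => Nbar_le (h x) t)) -> continuous op Nbar_open h.
Proof.
  intros Hh O HO. apply open_of_locally_open; auto. intros x Ox.
  destruct (h x) as [j|] eqn:E.
  - exists (fun z => least (Nbar_le (h z)) j). split; [|split].
    + apply (clopen_least op Htop (fun t z => Nbar_le (h z) t)), Hh.
    + apply least_Nbar_le; auto.
    + intros z Hz. apply least_Nbar_le in Hz. rewrite Hz; exact Ox.
  - destruct (HO Ox) as [M HM].
    exists (fun z => forall i, i < M -> ~ Nbar_le (h z) i). repeat split.
    + apply clopen_forall_lt; auto. intros; apply clopen_not, Hh.
    + intros i _; rewrite E; simpl; auto.
    + intros z Hz. destruct (h z) as [n|] eqn:Ez; [|exact Ox].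
      apply HM. destruct (Nat.lt_ge_cases n M) as [H|H]; auto.
      exfalso; apply (Hz n H); simpl; lia.
Qed.

Lemma continuous_prod (p : T -> nat -> Nbar) :
  (forall c, continuous op Nbar_open (fun x => p x c)) -> continuous op prod_open p.
Proof.
  intros Hp U HU. apply open_of_locally_open; auto. intros x Ux.
  destruct (HU _ Ux) as [l [Hl HlU]].
  exists (fun z => forall q, In q l -> snd q (p z (fst q))). repeat split.
  - apply open_forall_in; auto. intros q Hq. apply Hp, Hl, Hq.
  - intros q Hq; apply Hl, Hq.
  - intros z Hz; apply HlU, Hz.
Qed.

Lemma continuous_EF (p : T -> EF) :
  (forall c, continuous op Nbar_open (fun x => proj1_sig (p x) c)) -> continuous op EF_open p.
Proof.
  intros Hp V [U [HU HV]].
  apply (open_ext op (fun x => U (proj1_sig (p x)))).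
  - intro x; symmetry; apply HV.
  - apply (continuous_prod (fun x => proj1_sig (p x))); auto.
Qed.

End NbarValuedMaps.

Section Encoding.
Context {X : Type} (D : nat -> nat -> X -> Prop).

Definition index_of (k : nat) (x : X) : Nbar := first_index (fun j => D k j x).

Definition bounded_before (k t : nat) (x : X) : Prop :=
  forall i, i < k -> Nbar_le (index_of i x) t.

(* Coordinate [to_nat (k, t)] carries [index_of k x] only when [t] is the maximum of
   the first [k] indices; otherwise it is [Some 0]. Then at most one coordinate is
   infinite, yet every index is recorded. *)
Definition encode (x : X) (c : nat) : Nbar :=
  let (k, t) := of_nat c in
  if excluded_middle_informative (least (fun s => bounded_before k s x) t)
  then index_of k x else Some 0.

Lemma encode_at (k t : nat) (x : X) :
  least (fun s => bounded_before k s x) t -> encode x (to_nat (k, t)) = index_of k x.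
Proof.
  intro Ht. unfold encode. rewrite cancel_of_to.
  destruct excluded_middle_informative; tauto.
Qed.

Lemma encode_None (x : X) (c : nat) : encode x c = None ->
  exists k t, c = to_nat (k, t) /\ least (fun s => bounded_before k s x) t /\ index_of k x = None.
Proof.
  unfold encode. destruct (of_nat c) as [k t] eqn:E.
  destruct excluded_middle_informative as [Ht|]; [|discriminate].
  intro Hk. exists k, t. rewrite <- E, cancel_to_of. auto.
Qed.

Lemma encode_eventually_finite (x : X) : eventually_finite (encode x).
Proof.
  destruct (classic (exists c0, encode x c0 = None)) as [[c0 H0]|H0].
  - exists (S c0). intros c Hc Hn.
    destruct (encode_None _ _ H0) as (k0 & t0 & -> & L0 & N0).
    destruct (encode_None _ _ Hn) as (k & t & -> & L & N).
    assert (k = k0) as <-.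
    { destruct (Nat.lt_trichotomy k k0) as [H|[H|H]]; auto; exfalso.
      - pose proof (proj1 L0 k H) as Hle. rewrite N in Hle. exact Hle.
      - pose proof (proj1 L k0 H) as Hle. rewrite N0 in Hle. exact Hle. }
    rewrite (least_unique _ _ _ L L0) in Hc. lia.
  - exists 0. intros c _ Hc. apply H0; eauto.
Qed.

Definition encode_EF (x : X) : EF := exist _ (encode x) (encode_eventually_finite x).

Context (op : (X -> Prop) -> Prop) (Htop : is_topology op).
Hypothesis HD : forall k j, clopen op (D k j).

Lemma clopen_index_of_le (k t : nat) : clopen op (fun x => Nbar_le (index_of k x) t).
Proof.
  apply (clopen_ext op (fun x => exists j, j <= t /\ D k j x)).
  - intro x; symmetry; apply first_index_le.
  - apply clopen_exists_le; auto.
Qed.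

Lemma continuous_encode_EF : continuous op EF_open encode_EF.
Proof.
  apply continuous_EF; auto. intro c. apply continuous_of_clopen_sublevels; auto. intro r.
  simpl. unfold encode. destruct (of_nat c) as [k t].
  apply (clopen_ext op
    (fun x => ~ least (fun s => bounded_before k s x) t \/ Nbar_le (index_of k x) r)).
  - intro x. destruct excluded_middle_informative; simpl; [tauto | split; [lia | tauto]].
  - apply clopen_or; auto.
    + apply clopen_not, (clopen_least op Htop (fun s x => bounded_before k s x)). intro s.
      apply clopen_forall_lt; auto. intros; apply clopen_index_of_le.
    + apply clopen_index_of_le.
Qed.

End Encoding.

Fixpoint maxr (f : nat -> nat) (n : nat) : nat :=
  match n with 0 => f 0 | S n => Nat.max (maxr f n) (f (S n)) end.

Lemma le_maxr (f : nat -> nat) (n i : nat) : i <= n -> f i <= maxr f n.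
Proof.
  induction n as [|n IH]; intro Hi; simpl.
  - replace i with 0 by lia; lia.
  - destruct (Nat.eq_dec i (S n)) as [->|Hne]; [lia|]. specialize (IH ltac:(lia)); lia.
Qed.

Lemma maxr_mono (f f' : nat -> nat) (n n' : nat) :
  (forall i, f i <= f' i) -> n <= n' -> maxr f n <= maxr f' n'.
Proof.
  intros Hf Hn. transitivity (maxr f n').
  - induction Hn; simpl; lia.
  - clear Hn. induction n' as [|n' IH]; simpl; [apply Hf|]. specialize (Hf (S n')); lia.
Qed.

Fixpoint premax (v : nat -> nat) (k : nat) : nat :=
  match k with 0 => 0 | S k => Nat.max (premax v k) (v k) end.

Lemma le_premax (v : nat -> nat) (i k : nat) : i < k -> v i <= premax v k.
Proof.
  induction k as [|k IH]; intro Hi; simpl; [lia|].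
  destruct (Nat.eq_dec i k) as [->|Hne]; [lia|]. specialize (IH ltac:(lia)); lia.
Qed.

Lemma premax_le (v : nat -> nat) (k t : nat) : (forall i, i < k -> v i <= t) -> premax v k <= t.
Proof.
  induction k as [|k IH]; intro Hv; simpl; [lia|].
  apply Nat.max_lub; [apply IH; auto | apply Hv; lia].
Qed.

Section Domination.
Variable g : nat -> nat -> nat.

Definition hull (k s : nat) : nat := Nat.max s (maxr (fun k' => maxr (g k') s) k).

Lemma le_hull_l (k s : nat) : s <= hull k s.
Proof. apply Nat.le_max_l. Qed.

Lemma le_hull_g (k s : nat) : g k s <= hull k s.
Proof.
  unfold hull. pose proof (le_maxr (g k) s s (le_n _)).
  pose proof (le_maxr (fun k' => maxr (g k') s) k k (le_n _)). lia.
Qed.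

Lemma hull_mono (k k' s s' : nat) : k <= k' -> s <= s' -> hull k s <= hull k' s'.
Proof.
  intros Hk Hs. unfold hull. apply Nat.max_le_compat; auto.
  apply maxr_mono; auto. intro i; apply maxr_mono; auto.
Qed.

Fixpoint orbit (c k : nat) : nat :=
  match k with 0 => c | S k => hull k (orbit c k) end.

Lemma le_orbit (c k : nat) : c <= orbit c k.
Proof. induction k as [|k IH]; simpl; [lia|]. pose proof (le_hull_l k (orbit c k)); lia. Qed.

Lemma orbit_mono (c c' k : nat) : c <= c' -> orbit c k <= orbit c' k.
Proof. intro Hc. induction k as [|k IH]; simpl; auto. apply hull_mono; auto. Qed.

Definition dominant (k : nat) : nat := hull k (orbit k k).

(* The running maximum b := premax v satisfies b (k + 1) <= hull k (b k) from M on;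
   as [hull] is monotone in [k], iterating it from index 0 with any start above
   b M majorizes b, and the start can be taken to be k itself once k >= b M. *)
Lemma eventually_le_dominant (v : nat -> nat) (M : nat) :
  (forall k, M <= k -> v k <= g k (premax v k)) ->
  forall k, M + premax v M <= k -> v k <= dominant k.
Proof.
  intros Hv.
  assert (Horbit : forall n, premax v (M + n) <= orbit (premax v M) (M + n)).
  { induction n as [|n IH].
    - rewrite Nat.add_0_r. apply le_orbit.
    - rewrite Nat.add_succ_r; simpl.
      pose proof (Hv (M + n) (Nat.le_add_r M n)).
      pose proof (le_hull_g (M + n) (premax v (M + n))).
      pose proof (le_hull_l (M + n) (premax v (M + n))).
      pose proof (hull_mono (M + n) (M + n) _ _ (le_n _) IH). lia. }
  intros k Hk.
  assert (Hb : premax v k <= orbit k k).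
  { specialize (Horbit (k - M)). replace (M + (k - M)) with k in Horbit by lia.
    etransitivity; [exact Horbit | apply orbit_mono; lia]. }
  pose proof (Hv k ltac:(lia)). pose proof (le_hull_g k (premax v k)).
  pose proof (hull_mono k k _ _ (le_n _) Hb). unfold dominant; lia.
Qed.

End Domination.

Lemma clopen_indices_eventually_bounded {X : Type} (op : (X -> Prop) -> Prop)
  (Htop : is_topology op)
  (Hb : forall Psi : X -> EF, continuous op EF_open Psi -> bounded (fun f => exists x, Psi x = f))
  (D : nat -> nat -> X -> Prop) (HD : forall k j, clopen op (D k j)) :
  exists G : nat -> nat, forall x, (forall k, exists j, D k j x) ->
    exists K, forall k, K <= k -> exists j, j <= G k /\ D k j x.
Proof.
  destruct (Hb (encode_EF D) (continuous_encode_EF D op Htop HD)) as [g Hg].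
  exists (dominant (fun k s => g (to_nat (k, s)))). intros x Hx.
  assert (Hfin : forall k, exists n, index_of D k x = Some n).
  { intro k. destruct (index_of D k x) as [n|] eqn:E; eauto. exfalso.
    unfold index_of in E. rewrite first_index_None in E. destruct (Hx k) as [j Hj]. exact (E j Hj). }
  destruct (choice _ Hfin) as [v Hv].
  assert (Hmax : forall k, least (fun t => bounded_before D k t x) (premax v k)).
  { intro k. split.
    - intros i Hi. rewrite Hv. apply le_premax, Hi.
    - intros t Ht Hle. enough (premax v k <= t) by lia.
      apply premax_le. intros i Hi. specialize (Hle i Hi). rewrite Hv in Hle. exact Hle. }
  destruct (Hg (encode_EF D x) (ex_intro _ x eq_refl)) as [M HM].
  assert (Hvg : forall k, M <= k -> v k <= g (to_nat (k, premax v k))).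
  { intros k Hk. pose proof (to_nat_non_decreasing k (premax v k)).
    specialize (HM (to_nat (k, premax v k)) ltac:(lia)).
    change (proj1_sig (encode_EF D x)) with (encode D x) in HM.
    rewrite encode_at, Hv in HM; auto. }
  exists (M + premax v M). intros k Hk. apply first_index_le.
  change (Nbar_le (index_of D k x) (dominant (fun k s => g (to_nat (k, s))) k)).
  rewrite Hv. exact (eventually_le_dominant _ v M Hvg k Hk).
Qed.

Lemma eventually_not_in {B : Type} (f : nat -> B) :
  (forall i j, i < j -> f i <> f j) ->
  forall l, exists N, forall i, N <= i -> ~ In (f i) l.
Proof.
  intros Hf l. induction l as [|b l [N HN]].
  - exists 0. intros i _ [].
  - destruct (classic (exists i0, f i0 = b)) as [[i0 <-]|Hb].
    + exists (Nat.max N (S i0)). intros i Hi [E|Hin].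
      * apply (Hf i0 i); [lia | auto].
      * apply (HN i); [lia | auto].
    + exists N. intros i Hi [E|Hin]; [apply Hb; eauto | apply (HN i); auto].
Qed.

Lemma list_in_range_bound {T : Type} (u : nat -> T -> Prop) (l : list (T -> Prop)) :
  (forall j j' y, j <= j' -> u j y -> u j' y) -> (forall W, In W l -> in_range u W) ->
  exists J, forall W, In W l -> forall y, W y -> u J y.
Proof.
  intro Hmono. induction l as [|W l IH]; intro Hl.
  - exists 0. intros _ [].
  - destruct IH as [J HJ]; [intros; apply Hl; right; auto|].
    destruct (Hl W (or_introl eq_refl)) as [j <-].
    exists (Nat.max J j). intros W' [<-|HW'] y Hy.
    + apply (Hmono j); [lia | exact Hy].
    + apply (Hmono J); [lia | exact (HJ W' HW' y Hy)].
Qed.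

(* The "finite" part of a point-cofinite cover: a finite list misses [union_list (F k)]
   for large [k], because each of its members of that form omits some point, and that
   point lies in [union_list (F k)] for all large [k]. *)
Lemma point_cofinite_of_eventually {T : Type} (u : nat -> nat -> T -> Prop)
  (F : nat -> list (T -> Prop)) :
  (forall k, no_finite_subcover (u k)) -> (forall k W, In W (F k) -> in_range (u k) W) ->
  (forall y, exists K, forall k, K <= k -> union_list (F k) y) ->
  point_cofinite_cover (fun W => exists k, W = union_list (F k)).
Proof.
  intros Hnf Hrange Hev. split; [|split].
  - intro y. destruct (Hev y) as [K HK]. exists (union_list (F K)); eauto.
  - intros [l Hl].
    assert (Hmiss : exists K, forall k, K <= k -> ~ In (union_list (F k)) l).
    { clear Hl. induction l as [|W l [N HN]].
      - exists 0. intros k _ [].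
      - destruct (classic (exists k0, W = union_list (F k0))) as [[k0 ->]|HW].
        + destruct (Hnf k0 (F k0) (Hrange k0)) as [y Hy].
          destruct (Hev y) as [K HK].
          exists (Nat.max N K). intros k Hk [E|Hin].
          * pose proof (HK k ltac:(lia)) as Hyk. rewrite <- E in Hyk.
            destruct Hyk as [W [HW Wy]]. exact (Hy W HW Wy).
          * apply (HN k); [lia | auto].
        + exists N. intros k Hk [E|Hin]; [apply HW; eauto | apply (HN k); auto]. }
    destruct Hmiss as [K HK]. apply (HK K (le_n _)), Hl. eauto.
  - intro y. destruct (Hev y) as [K HK].
    exists (map (fun k => union_list (F k)) (seq 0 K)).
    intros W [[k ->] Hy]. apply (in_map (fun k => union_list (F k))), in_seq.
    destruct (Nat.lt_ge_cases k K); [lia|]. exfalso; apply Hy, HK; auto.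
Qed.

Lemma hereditarily_Hurewicz_of_bounded {X : Type} (op : (X -> Prop) -> Prop)
  (Htop : is_topology op) (Hclop : open_countable_union_clopen op) :
  (forall Psi : X -> EF, continuous op EF_open Psi -> bounded (fun f => exists x, Psi x = f)) ->
  hereditarily_Hurewicz op.
Proof.
  intros Hb Y u Hu.
  destruct (choice (fun (p : nat * nat) U =>
      op U /\ forall y, u (fst p) (snd p) y <-> U (proj1_sig y))) as [U HU].
  { intros [k n]. apply (proj1 (proj1 (Hu k))). }
  destruct (choice (fun p (C : nat -> X -> Prop) => (forall m, clopen op (C m)) /\ forall x, U p x <-> exists m, C m x))
    as [C HC].
  { intro p. apply Hclop, HU. }
  set (D := fun k j => C (k, fst (of_nat j)) (snd (of_nat j))).
  destruct (clopen_indices_eventually_bounded op Htop Hb D) as [G HG].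
  { intros k j. apply HC. }
  set (F := fun k => map (fun j => u k (fst (of_nat j))) (seq 0 (S (G k)))).
  assert (HF : forall k W, In W (F k) -> in_range (u k) W).
  { intros k W HW. apply in_map_iff in HW. destruct HW as [j [<- _]]. eexists; eauto. }
  exists F. split; auto.
  apply (point_cofinite_of_eventually u F); auto; [intro k; apply Hu|].
  intro y.
  destruct (HG (proj1_sig y)) as [K HK].
  { intro k. destruct (proj2 (proj1 (Hu k)) y) as [n Hn].
    apply (HU (k, n)), (HC (k, n)) in Hn. destruct Hn as [m Hm].
    exists (to_nat (n, m)). unfold D. rewrite cancel_of_to. exact Hm. }
  exists K. intros k Hk. destruct (HK k Hk) as [j [Hj Dj]].
  exists (u k (fst (of_nat j))). split.
  - apply (in_map (fun j => u k (fst (of_nat j)))), in_seq. lia.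
  - apply (HU (k, fst (of_nat j))), (HC (k, fst (of_nat j))). eauto.
Qed.

(* Pass to a subsequence of pairwise distinct members; each point misses only
   finitely many members, hence only finitely many terms of the subsequence. *)
Lemma point_cofinite_subseq {T : Type} (V : nat -> T -> Prop) :
  point_cofinite_cover (fun W => exists k, W = V k) ->
  exists s : nat -> nat, (forall i, i <= s i) /\
    forall y, exists N, forall i, N <= i -> V (s i) y.
Proof.
  intros [_ [Hinf Hcof]].
  assert (Hnew : forall n, exists k, n < k /\ ~ In (V k) (map V (seq 0 (S n)))).
  { intro n. apply NNPP; intro Hn. apply Hinf. exists (map V (seq 0 (S n))).
    intros W [k ->]. destruct (Nat.le_gt_cases k n) as [Hk|Hk].
    - apply in_map, in_seq; lia.
    - apply NNPP; intro Hk'; apply Hn; eauto. }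
  destruct (choice _ Hnew) as [next Hnext].
  set (s := fun i => Nat.iter i next 0).
  assert (Hs : forall i, s i < s (S i)) by (intro i; apply Hnext).
  assert (Hmono : forall i j, i <= j -> s i <= s j).
  { intros i j H; induction H as [|j H IH]; [lia | specialize (Hs j); lia]. }
  assert (Hdist : forall i j, i < j -> V (s i) <> V (s j)).
  { intros i [|j] Hij E; [lia|].
    apply (proj2 (Hnext (s j))). change (next (s j)) with (s (S j)). rewrite <- E.
    apply in_map, in_seq. specialize (Hmono i j ltac:(lia)). lia. }
  exists s. split.
  - induction i as [|i IH]; [lia | specialize (Hs i); lia].
  - intro y. destruct (Hcof y) as [E HE].
    destruct (eventually_not_in (fun i => V (s i)) Hdist E) as [N HN].
    exists N. intros i Hi. apply NNPP; intro Hy. apply (HN i Hi), HE. split; eauto.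
Qed.

Lemma Hurewicz_diagonal {T : Type} (op : (T -> Prop) -> Prop) (w : nat -> nat -> T -> Prop) :
  Hurewicz op ->
  (forall k j, op (w k j)) -> (forall k y, exists j, w k j y) ->
  (forall k j j' y, j <= j' -> w k j y -> w k j' y) ->
  (forall k k' j y, k' <= k -> w k j y -> w k' j y) ->
  exists h : nat -> nat, forall y, exists N, forall i, N <= i -> w i (h i) y.
Proof.
  intros HH Hopen Hcov Hj Hk.
  (* Hurewicz only applies to covers without finite subcovers; by antitonicity in [k],
     once one [w k0] has none, neither has any later [w k]. *)
  destruct (classic (exists k0, no_finite_subcover (w k0))) as [[k0 Hk0]|Hfin].
  - set (u := fun k => w (Nat.max k k0)).
    destruct (HH u) as [F [HFu HF]].
    { intro k. split; [split; [intro; apply Hopen | intro; apply Hcov]|].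
      intros l Hl. destruct (list_in_range_bound (u k) l (Hj _) Hl) as [J HJ].
      destruct (Hk0 [w k0 J]) as [y Hy]; [intros W [<-|[]]; exists J; auto|].
      exists y. intros W HW Wy. apply (Hy _ (or_introl eq_refl)).
      apply (Hk (Nat.max k k0)); [lia | exact (HJ W HW y Wy)]. }
    destruct (point_cofinite_subseq (fun k => union_list (F k)) HF) as [s [Hs Hsy]].
    destruct (choice (fun k J => forall W, In W (F k) -> forall y, W y -> u k J y)) as [J HJ].
    { intro k. apply list_in_range_bound; [apply Hj | apply HFu]. }
    exists (fun i => J (s i)). intro y. destruct (Hsy y) as [N HN]. exists N. intros i Hi.
    destruct (HN i Hi) as [W [HW Wy]].
    apply (Hk (Nat.max (s i) k0)); [specialize (Hs i); lia | exact (HJ _ W HW y Wy)].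
  - assert (Hall : forall k, exists J, forall y, w k J y).
    { intro k. assert (Hk' : ~ no_finite_subcover (w k)) by eauto.
      apply not_all_ex_not in Hk' as [l Hl]. apply imply_to_and in Hl as [Hin Hno].
      destruct (list_in_range_bound (w k) l (Hj k) Hin) as [J HJ].
      exists J. intro y. apply NNPP; intro Hy. apply Hno. exists y.
      intros W HW Wy. exact (Hy (HJ W HW y Wy)). }
    destruct (choice _ Hall) as [h Hh]. exists h. intro y. exists 0. auto.
Qed.

Lemma bound_le (P : nat -> nat -> Prop) (k : nat) :
  (forall i j j', j <= j' -> P i j -> P i j') -> (forall i, i <= k -> exists j, P i j) ->
  exists j, forall i, i <= k -> P i j.
Proof.
  intro Hmono. induction k as [|k IH]; intro HP.
  - destruct (HP 0 (le_n _)) as [j Hj]. exists j. intros i Hi. replace i with 0 by lia. auto.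
  - destruct IH as [J HJ]; [intros i Hi; apply HP; lia|].
    destruct (HP (S k) (le_n _)) as [j Hj]. exists (Nat.max J j). intros i Hi.
    destruct (Nat.eq_dec i (S k)) as [->|Hne].
    + apply (Hmono _ j); [lia | auto].
    + apply (Hmono _ J); [lia | apply HJ; lia].
Qed.

Lemma prod_open_bounded_block (m k j : nat) :
  prod_open (fun f => forall i, i <= k -> Nbar_le (f (m + i)) j).
Proof.
  intros f Hf. exists (map (fun i => (m + i, fun a => Nbar_le a j)) (seq 0 (S k))). split.
  - intros p Hp. apply in_map_iff in Hp as [i [<- Hi]]. apply in_seq in Hi. simpl.
    split; [intros [] | apply Hf; lia].
  - intros g Hg i Hi. apply (Hg (m + i, fun a => Nbar_le a j)).
    apply (in_map (fun i => (m + i, fun a => Nbar_le a j))), in_seq. lia.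
Qed.

Lemma bounded_on_finite_tail {X : Type} (op : (X -> Prop) -> Prop)
  (HH : hereditarily_Hurewicz op) (Psi : X -> EF) (Hc : continuous op EF_open Psi) (m : nat) :
  exists gm : nat -> nat, forall x, (forall n, m <= n -> proj1_sig (Psi x) n <> None) ->
    le_star (proj1_sig (Psi x)) gm.
Proof.
  set (Y := fun x => forall n, m <= n -> proj1_sig (Psi x) n <> None).
  set (w := fun k j (y : {x | Y x}) =>
              forall i, i <= k -> Nbar_le (proj1_sig (Psi (proj1_sig y)) (m + i)) j).
  destruct (Hurewicz_diagonal _ w (HH Y)) as [h Hh].
  - intros k j. exists (fun x => forall i, i <= k -> Nbar_le (proj1_sig (Psi x) (m + i)) j).
    split; [|reflexivity].
    apply (Hc (fun e => forall i, i <= k -> Nbar_le (proj1_sig e (m + i)) j)).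
    exists (fun f => forall i, i <= k -> Nbar_le (f (m + i)) j).
    split; [apply prod_open_bounded_block | reflexivity].
  - intros k [x Hx]. apply bound_le; [intros i j j'; apply Nbar_le_mono|].
    intros i _. simpl. destruct (proj1_sig (Psi x) (m + i)) as [n|] eqn:E.
    + exists n. simpl. lia.
    + exfalso. exact (Hx (m + i) (Nat.le_add_r m i) E).
  - intros k j j' y Hjj' Hw i Hi. apply (Nbar_le_mono _ j); auto.
  - intros k k' j y Hkk' Hw i Hi. apply Hw. lia.
  - exists (fun n => h (n - m)). intros x Hx. destruct (Hh (exist _ x Hx)) as [N HN].
    exists (m + N). intros n Hn. specialize (HN (n - m) ltac:(lia) (n - m) (le_n _)).
    simpl in HN. replace (m + (n - m)) with n in HN by lia. exact HN.
Qed.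

Lemma bounded_of_hereditarily_Hurewicz {X : Type} (op : (X -> Prop) -> Prop) :
  hereditarily_Hurewicz op ->
  forall Psi : X -> EF, continuous op EF_open Psi -> bounded (fun f => exists x, Psi x = f).
Proof.
  intros HH Psi Hc.
  destruct (choice _ (bounded_on_finite_tail op HH Psi Hc)) as [gm Hgm].
  exists (fun n => maxr (fun m => gm m n) n).
  intros f [x <-]. destruct (proj2_sig (Psi x)) as [m Hm].
  destruct (Hgm m x Hm) as [N HN]. exists (Nat.max N m). intros n Hn.
  apply (Nbar_le_mono _ (gm m n)).
  - apply (le_maxr (fun m => gm m n)). lia.
  - apply HN; lia.
Qed.

Theorem mainTheorem1 (X : Type) (op : (X -> Prop) -> Prop)
  (Htop : is_topology op) (Hclop : open_countable_union_clopen op) :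
  hereditarily_Hurewicz op <->
  (forall Psi : X -> EF, continuous op EF_open Psi ->
     bounded (fun f => exists x, Psi x = f)).
Proof.
  split.
  - apply bounded_of_hereditarily_Hurewicz.
  - apply hereditarily_Hurewicz_of_bounded; auto.
Qed.
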